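(* Let $m=2^{l_m}$ with $l_m\ge1$, let $(v_0,\dots,v_{m-1})$ be a Cantor basis of $\mathbb{F}_{2^m}$, let $0\le l<m/2$, $n=m\cdot 2^l$ and $n_p=n/m=2^l$. Define the $\mathbb{F}_2$-linear map $E_\Sigma:\mathbb{F}_2[x]_{<n}\to\mathbb{F}_{2^m}^{\,n_p}$ by $$E_\Sigma(A)=\bigl(A(v_{l+m/2}+u)\bigr)_{u\in V_l}$$ (i.e. evaluation of $A$, viewed as a polynomial over $\mathbb{F}_{2^m}$, at the $n_p$ points of $\Sigma=v_{l+m/2}+V_l$). Then $E_\Sigma$ is a bijection between $\mathbb{F}_2[x]_{<n}$ and $\mathbb{F}_{2^m}^{\,n_p}$.
   Context: A Cantor basis of $\mathbb{F}_{2^m}$ (for $m$ a power of $2$) is an $\mathbb{F}_2$-basis $(v_0,\dots,v_{m-1})$ of $\mathbb{F}_{2^m}$ with $v_0=1$ and $v_i^2+v_i=v_{i-1}$ for $0<i<m$. For $0\le i\le m$ let $V_0=\{0\}$ and $V_i=\mathrm{span}_{\mathbb{F}_2}\{v_0,\dots,v_{i-1}\}$. $\mathbb{F}_2[x]_{<n}$ denotes the polynomials over $\mathbb{F}_2$ of degree less than $n$. *)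

From HB Require Import structures.
From mathcomp Require Import all_boot all_order all_algebra all_field.
Set Implicit Arguments. Unset Strict Implicit. Unset Printing Implicit Defensive.
Import GRing.Theory.
Local Open Scope ring_scope.

Definition bitcomb (F : finFieldType) (v : nat -> F) (i : nat)
  (b : {ffun 'I_i -> bool}) : F :=
  \sum_(j < i) (if b j then v j else 0).

Definition Vspan (F : finFieldType) (v : nat -> F) (i : nat) : {set F} :=
  [set bitcomb v b | b : {ffun 'I_i -> bool}].

Definition cantor_basis (F : finFieldType) (m : nat) (v : nat -> F) : Prop :=
  [/\ bijective (@bitcomb F v m),
      v 0%N = 1
    & forall i : nat, (0 < i < m)%N -> v i ^+ 2 + v i = v i.-1].

(* Evaluation of a polynomial over F_2 at a point of F
   (viewing its coefficients in the prime subfield of F). *)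
Definition evalF2 (F : finFieldType) (A : {poly 'F_2}) (x : F) : F :=
  (map_poly (fun c : 'F_2 => (val c)%:R : F) A).[x].

From HB Require Import structures.
From mathcomp Require Import all_boot all_order all_algebra all_field.
Import GRing.Theory.
Local Open Scope ring_scope.
Set Implicit Arguments. Unset Strict Implicit.

(* Over F_2, A(x^2) = A(x)^2, so a polynomial A vanishing on
   Sigma = v_(l+m/2) + V_l also vanishes at every Frobenius conjugate w^(2^j).
   These m 2^l points are pairwise distinct.  Indeed the additive map
   s(x) = x^2 + x sends v_i to v_(i-1) and V_l to 0, so s^l commutes with
   Frobenius and collapses Sigma to the single point a = v_(m/2); and a has a
   Frobenius orbit of full length m, since s^(m/2)(a) = a^(2^(m/2)) + a = v_0
   = 1 shows that a lies outside F_(2^(m/2)), the largest proper subfield.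
   Hence a nonzero A with deg A < n = m 2^l cannot vanish on Sigma, so
   evaluation on Sigma is injective, and bijective because source and target
   both have 2^n elements. *)

Section Characteristic2.
Variable R : idomainType.
Hypothesis charR : 2%N \in [pchar R].

Lemma expr2nD e (x y : R) : (x + y) ^+ (2 ^ e) = x ^+ (2 ^ e) + y ^+ (2 ^ e).
Proof. by rewrite exprDn_pchar // pnatX pnatE ?charR. Qed.

Lemma expr2n_inj e : injective (fun x : R => x ^+ (2 ^ e)).
Proof.
move=> x y /= Exy; have : (x + y) ^+ (2 ^ e) == 0 by rewrite expr2nD Exy addrr_pchar2.
by rewrite expf_eq0 addr_eq0 (oppr_pchar2 charR) => /andP[_ /eqP].
Qed.

Lemma expr2n_fixedM (x : R) e c : x ^+ (2 ^ e) = x -> x ^+ (2 ^ (e * c)) = x.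
Proof.
by move=> xF; elim: c => [|c IH]; rewrite ?muln0 ?expr1 // mulnS expnD exprM xF IH.
Qed.

Lemma expr2n_fixed_gcd (x : R) d e : (0 < d)%N ->
  x ^+ (2 ^ d) = x -> x ^+ (2 ^ e) = x -> x ^+ (2 ^ gcdn d e) = x.
Proof.
move=> d_gt0 xFd xFe; have [a _ /dvdnP[c Ec]] := Bezoutl e d_gt0.
have := expr2n_fixedM c xFd; rewrite mulnC -Ec expnD mulnC exprM.
by rewrite mulnC expr2n_fixedM.
Qed.

Lemma expr2n_orbit_inj (x : R) k i j :
  x ^+ (2 ^ 2 ^ k.+1) = x -> x ^+ (2 ^ 2 ^ k) != x ->
  (i < 2 ^ k.+1)%N -> (j < 2 ^ k.+1)%N -> x ^+ (2 ^ i) = x ^+ (2 ^ j) -> i = j.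
Proof.
wlog le_ij : i j / (i <= j)%N.
  move=> W xF xNF i_lt j_lt Eij.
  by case: (leqP i j) => [le_ij | /ltnW le_ji]; [apply: W | apply/esym/W].
move=> xF xNF _ j_lt Eij; rewrite -(subnKC le_ij) in Eij j_lt *.
set d := (j - i)%N in Eij j_lt *.
have xFd : x ^+ (2 ^ d) = x.
  by apply: (@expr2n_inj i); rewrite /= -exprM -expnD addnC -Eij.
have [-> | d_gt0] := posnP d; first by rewrite addn0.
(* gcd(d, 2^(k+1)) is a power of 2 smaller than 2^(k+1), hence divides 2^k. *)
have [e _ Eg] := dvdn_pfactor (gcdn d (2 ^ k.+1)) k.+1 (isT : prime 2)
  (dvdn_gcdr _ _).
have lt_d : (d < 2 ^ k.+1)%N := leq_ltn_trans (leq_addl i d) j_lt.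
have le_e_k : (e <= k)%N.
  rewrite -ltnS -(@ltn_exp2l 2) // -Eg.
  exact: leq_ltn_trans (dvdn_leq d_gt0 (dvdn_gcdl _ _)) lt_d.
case/negP: xNF; rewrite -(subnKC le_e_k) expnD expr2n_fixedM // -Eg.
exact: expr2n_fixed_gcd.
Qed.

Definition artin_schreier (x : R) := x ^+ 2 + x.

Lemma iter_artin_schreier_is_zmod_morphism t :
  zmod_morphism (iter t artin_schreier).
Proof.
move=> x y; rewrite !(oppr_pchar2 charR); elim: t => //= t ->.
by rewrite /artin_schreier (expr2nD 1) addrACA.
Qed.

HB.instance Definition _ t := GRing.isZmodMorphism.Build R R
  (iter t artin_schreier) (iter_artin_schreier_is_zmod_morphism t).

Lemma iter_artin_schreier_expr2n t e x :
  iter t artin_schreier (x ^+ (2 ^ e)) = iter t artin_schreier x ^+ (2 ^ e).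
Proof. by elim: t => //= t ->; rewrite /artin_schreier expr2nD -!exprM mulnC. Qed.

Lemma iter_artin_schreier_2exp a x :
  iter (2 ^ a) artin_schreier x = x ^+ (2 ^ 2 ^ a) + x.
Proof.
elim: a x => [|a IH] x; first by rewrite /= /artin_schreier expn1.
rewrite expnS mul2n -addnn iterD !IH expr2nD -exprM -expnD addnn -mul2n -expnS.
by rewrite -addrA (addKr_pchar2 charR).
Qed.
End Characteristic2.

Lemma bitcomb_in_Vspan (F : finFieldType) (v : nat -> F) i (b : {ffun 'I_i -> bool}) :
  bitcomb v b \in Vspan v i.
Proof. by apply/imsetP; exists b. Qed.

Section CantorBasis.
Variable F : finFieldType.
Hypothesis charF : 2%N \in [pchar F].
Variables (m : nat) (v : nat -> F).
Hypothesis v0 : v 0%N = 1.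
Hypothesis artin_schreier_v : forall i, (0 < i < m)%N -> v i ^+ 2 + v i = v i.-1.

Lemma iter_artin_schreier_cantor t j : (j < m)%N ->
  iter t (@artin_schreier F) (v j) = if (t <= j)%N then v (j - t) else 0.
Proof.
move=> lt_jm; elim: t => [|t IH] /=; first by rewrite subn0.
rewrite IH; case: ltngtP => [lt_tj | lt_jt | ->].
- rewrite /artin_schreier artin_schreier_v ?subnS // subn_gt0 lt_tj.
  exact: leq_ltn_trans (leq_subr _ _) lt_jm.
- by rewrite /artin_schreier expr2 mul0r addr0.
- by rewrite subnn v0 /artin_schreier expr1n (addrr_pchar2 charF).
Qed.

Lemma iter_artin_schreier_Vspan t i u : (i <= m)%N -> (i <= t)%N ->
  u \in Vspan v i -> iter t (@artin_schreier F) u = 0.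
Proof.
move=> le_im le_it /imsetP[b _ ->]; rewrite raddf_sum /=; apply: big1 => j _.
case: (b j); last exact: raddf0.
have lt_jt : (j < t)%N by exact: leq_trans (ltn_ord j) le_it.
by rewrite iter_artin_schreier_cantor ?(leq_trans _ le_im) // leqNgt lt_jt.
Qed.

Lemma iter_artin_schreier_coset k l u : (l + k < m)%N ->
  u \in Vspan v l -> iter l (@artin_schreier F) (v (l + k) + u) = v k.
Proof.
move=> lt_lk_m Vu.
have le_lm : (l <= m)%N := ltnW (leq_ltn_trans (leq_addr k l) lt_lk_m).
rewrite raddfD /= iter_artin_schreier_cantor // leq_addr addKn.
by rewrite (iter_artin_schreier_Vspan (i := l)) ?addr0.
Qed.

Lemma bitcomb_inj i : injective (@bitcomb F v m) -> (i <= m)%N ->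
  injective (@bitcomb F v i).
Proof.
move=> bitcomb_m_inj le_im b1 b2 Eb.
pose widen (b : {ffun 'I_i -> bool}) :=
  [ffun j : 'I_m => oapp b false (insub (val j))].
have bitcomb_widen b : bitcomb v (widen b) = bitcomb v b.
  pose G j := if oapp b false (insub j) then v j else 0.
  rewrite /bitcomb (eq_bigr (fun j : 'I_i => G j)) => [|j _]; last by rewrite /G valK.
  rewrite (big_ord_widen m G le_im) [RHS]big_mkcond; apply: eq_bigr => j _.
  by rewrite ffunE /G; case: ltnP => // le_ij; rewrite insubN -?leqNgt.
apply/ffunP => j; have /bitcomb_m_inj/ffunP/(_ (widen_ord le_im j)) :=
  etrans (bitcomb_widen b1) (etrans Eb (esym (bitcomb_widen b2))).
by rewrite !ffunE /= valK.
Qed.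
End CantorBasis.

Section EvaluationOverF2.
Variable F : finFieldType.
Hypothesis charF : 2%N \in [pchar F].

Definition F2_in (c : 'F_2) : F := (val c)%:R.

Lemma F2_in_is_zmod_morphism : zmod_morphism F2_in.
Proof.
do 2![case=> [[|[|//]] ?]];
  by rewrite /F2_in /= ?subr0 ?subrr ?sub0r ?(oppr_pchar2 charF).
Qed.

Lemma F2_in_is_monoid_morphism : monoid_morphism F2_in.
Proof.
by split=> // - [[|[|//]] ?] [[|[|//]] ?]; rewrite /F2_in /= ?mul0r ?mulr0 ?mulr1.
Qed.

HB.instance Definition _ :=
  GRing.isZmodMorphism.Build 'F_2 F F2_in F2_in_is_zmod_morphism.
HB.instance Definition _ :=
  GRing.isMonoidMorphism.Build 'F_2 F F2_in F2_in_is_monoid_morphism.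

Lemma evalF2E (A : {poly 'F_2}) (x : F) : evalF2 A x = (map_poly F2_in A).[x].
Proof. by []. Qed.

Lemma evalF2B (A B : {poly 'F_2}) (x : F) :
  evalF2 (A - B) x = evalF2 A x - evalF2 B x.
Proof. by rewrite !evalF2E rmorphB hornerD hornerN. Qed.

Lemma evalF2_expr2n e (A : {poly 'F_2}) (x : F) :
  evalF2 A (x ^+ (2 ^ e)) = evalF2 A x ^+ (2 ^ e).
Proof.
elim: e => [|e IH]; first by rewrite !expr1.
rewrite expnSr !exprM -IH !evalF2E -!(pFrobenius_autE charF) -horner_map.
rewrite -map_poly_comp; congr horner; apply: eq_map_poly => c /=.
rewrite pFrobenius_autE.
by case: c => [[|[|//]] ?]; rewrite /F2_in /= ?expr0n ?expr1n.
Qed.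

Lemma evalF2_roots_eq0 (A : {poly 'F_2}) (s : seq F) : uniq s ->
  (size A <= size s)%N -> {in s, forall x, evalF2 A x = 0} -> A = 0.
Proof.
move=> s_uniq le_As s_roots; apply/eqP; rewrite -(map_poly_eq0 F2_in).
apply/eqP/(roots_geq_poly_eq0 _ s_uniq); last by rewrite size_map_poly.
by apply/allP => x /s_roots; rewrite /root -evalF2E => ->.
Qed.
End EvaluationOverF2.

Section CantorCosetEvaluation.
Variables (F : finFieldType) (k : nat) (v : nat -> F) (l : nat).
Local Notation m := (2 ^ k.+1)%N.
Local Notation h := (2 ^ k)%N.
Hypothesis cardF : #|F| = (2 ^ m)%N.
Hypothesis bitcomb_bij : bijective (@bitcomb F v m).
Hypothesis v0 : v 0%N = 1.
Hypothesis artin_schreier_v : forall i, (0 < i < m)%N -> v i ^+ 2 + v i = v i.-1.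
Hypothesis lt_lh : (l < h)%N.

Let charF : 2%N \in [pchar F] := card_finPcharP cardF (isT : prime 2).
Let lt_hm : (h < m)%N. Proof. by rewrite ltn_exp2l. Qed.
Let lt_lh_m : (l + h < m)%N. Proof. by rewrite expnS mul2n -addnn ltn_add2r. Qed.
Let le_lm : (l <= m)%N. Proof. exact: ltnW (leq_ltn_trans (leq_addr h l) lt_lh_m). Qed.

Lemma cantor_frobenius_orbit_inj i j : (i < m)%N -> (j < m)%N ->
  v h ^+ (2 ^ i) = v h ^+ (2 ^ j) -> i = j.
Proof.
apply: (expr2n_orbit_inj charF (x := v h)); first by rewrite -cardF expf_card.
have := iter_artin_schreier_2exp charF k (v h).
rewrite (iter_artin_schreier_cantor charF v0 artin_schreier_v) // leqnn subnn v0.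
by apply: contra_eq_neq => ->; rewrite (addrr_pchar2 charF) oner_eq0.
Qed.

Definition coset_conjugates :=
  [seq (v (l + h) + bitcomb v b) ^+ (2 ^ j)
     | b <- enum {ffun 'I_l -> bool}, j <- iota 0 m].

Lemma size_coset_conjugates : size coset_conjugates = (m * 2 ^ l)%N.
Proof. by rewrite size_allpairs size_iota -cardT card_ffun card_bool card_ord mulnC. Qed.

Lemma uniq_coset_conjugates : uniq coset_conjugates.
Proof.
apply: allpairs_uniq; [exact: enum_uniq | exact: iota_uniq |].
move=> [? ?] [? ?] /allpairsP[[b1 j1] [_ j1m [-> ->]]].
move=> /allpairsP[[b2 j2] [_ j2m [-> ->]]] /= E.
rewrite !mem_iota /= in j1m j2m.
have Ej : j1 = j2.
  apply: cantor_frobenius_orbit_inj => //.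
  have := congr1 (iter l (@artin_schreier F)) E.
  rewrite !(iter_artin_schreier_expr2n charF).
  by rewrite !(iter_artin_schreier_coset charF v0 artin_schreier_v) ?bitcomb_in_Vspan.
move: E; rewrite -{}Ej => /(expr2n_inj charF)/addrI.
by move/(bitcomb_inj (bij_inj bitcomb_bij) le_lm) ->.
Qed.

Lemma evalF2_coset_inj (A B : {poly 'F_2}) :
  (size A <= m * 2 ^ l)%N -> (size B <= m * 2 ^ l)%N ->
  (forall u, u \in Vspan v l ->
     evalF2 A (v (l + h) + u) = evalF2 B (v (l + h) + u)) ->
  A = B.
Proof.
move=> sA sB EAB; apply/eqP; rewrite -subr_eq0; apply/eqP.
apply: (evalF2_roots_eq0 charF uniq_coset_conjugates).
  rewrite size_coset_conjugates (leq_trans (size_polyD _ _)) // size_polyN geq_max sA.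
  exact: sB.
move=> _ /allpairsP[[b j] [_ _ ->]] /=.
by rewrite (evalF2_expr2n charF) (evalF2B charF) EAB ?bitcomb_in_Vspan // subrr
  expr0n expn_eq0.
Qed.

Lemma evalF2_coset_bij (y : F -> F) :
  exists! A : {poly 'F_2}, (size A <= m * 2 ^ l)%N /\
    (forall u, u \in Vspan v l -> evalF2 A (v (l + h) + u) = y u).
Proof.
pose phi (c : 'rV['F_2]_(m * 2 ^ l)) :=
  [ffun b : {ffun 'I_l -> bool} => evalF2 (rVpoly c) (v (l + h) + bitcomb v b)].
have phi_inj : injective phi.
  move=> c1 c2 /ffunP Ec; apply: (can_inj (@rVpolyK _ _)).
  apply: evalF2_coset_inj; rewrite ?size_poly // => _ /imsetP[b _ ->].
  by have := Ec b; rewrite !ffunE.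
have card_phi :
    (#|{ffun {ffun 'I_l -> bool} -> F}| <= #|'rV['F_2]_(m * 2 ^ l)|)%N.
  by rewrite card_mx !card_ffun card_bool card_ord cardF card_Fp // mul1n -expnM.
have /codomP[c Ec] := inj_card_onto phi_inj card_phi [ffun b => y (bitcomb v b)].
have eval_c u : u \in Vspan v l -> evalF2 (rVpoly c) (v (l + h) + u) = y u.
  by case/imsetP=> b _ ->; have /ffunP/(_ b) := Ec; rewrite !ffunE.
exists (rVpoly c); split=> [|A [sA EA]]; first by split; rewrite ?size_poly.
by apply: evalF2_coset_inj; rewrite ?size_poly // => u Vu; rewrite eval_c ?EA.
Qed.
End CantorCosetEvaluation.

Theorem proposition2 (F : finFieldType) (lm m l n : nat) (v : nat -> F) :
  (1 <= lm)%N -> m = (2 ^ lm)%N -> #|F| = (2 ^ m)%N ->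
  cantor_basis m v ->
  (l < m %/ 2)%N -> n = (m * 2 ^ l)%N ->
  forall y : F -> F,
    exists! A : {poly 'F_2},
      (size A <= n)%N /\
      (forall u : F, u \in Vspan v l -> evalF2 A (v (l + m %/ 2)%N + u) = y u).
Proof.
case: lm => // k _ -> cardF [bitcomb_bij v0 artin_schreier_v].
rewrite expnS mulKn // => lt_lh -> y.
by rewrite -expnS; apply: evalF2_coset_bij.
Qed.
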